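(* Let $V$ be a commutative unital quantale whose underlying lattice is a frame and in which $k=\top$. Let $(X,a)$ and $(Y,b)$ be $V$-groups, $\varphi\colon Y\to\mathrm{Aut}(X)$ a group action, and $X\rtimes Y$ the semidirect product group defined by $\varphi$. The following are equivalent: (i) $(X,a)\xrightarrow{\langle 1,0\rangle}(X\rtimes Y,a\otimes b)\underset{\langle 0,1\rangle}{\overset{\pi_2}{\rightleftarrows}}(Y,b)$ is a split extension in $\mathsf{VGrp}$, where $(a\otimes b)((x,y),(x',y'))=a(x,x')\otimes b(y,y')$; (ii) the map $\overline{\varphi}\colon(X\times Y,a\otimes b)\to(X\times Y,a\otimes b)$, $(x,y)\mapsto(\varphi_y(x),y)$, is a $V$-functor.
   Context: A commutative unital quantale $V$ is a complete lattice with a commutative associative operation $\otimes$ with unit $k$ preserving arbitrary joins in each variable. A $V$-category $(X,a)$: $a\colon X\times X\to V$ with $k\le a(x,x)$ and $a(x,x')\otimes a(x',x'')\le a(x,x'')$; a $V$-functor is a map $f$ with $a(x,x')\le b(f(x),f(x'))$. A $V$-group $(X,a,+)$ is a $V$-category with a group structure (additive, not necessarily abelian) such that $a(x_1,x_2)\otimes a(x_1',x_2')\le a(x_1+x_1',x_2+x_2')$; $V$-homomorphisms are group homomorphisms that are $V$-functors; category $\mathsf{VGrp}$ (pointed since $k=\top$). The semidirect product $X\rtimes Y$ is $X\times Y$ with $(x,y)+(x',y')=(x+\varphi_y(x'),y+y')$, $\varphi_y=\varphi(y)$; $\langle 1,0\rangle(x)=(x,0)$, $\langle 0,1\rangle(y)=(0,y)$,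 $\pi_2(x,y)=y$. A split extension in $\mathsf{VGrp}$ means: the structure on the middle object makes it a $V$-group, all three maps are $V$-homomorphisms, $\pi_2\circ\langle 0,1\rangle=1_Y$, and $\langle 1,0\rangle$ is a kernel of $\pi_2$ in $\mathsf{VGrp}$. *)

Set Implicit Arguments.
Unset Strict Implicit.

Record Quantale := {
  qcar :> Type;
  qle : qcar -> qcar -> Prop;
  qle_refl : forall x, qle x x;
  qle_trans : forall x y z, qle x y -> qle y z -> qle x z;
  qle_antisym : forall x y, qle x y -> qle y x -> x = y;
  qsup : (qcar -> Prop) -> qcar;
  qsup_ub : forall (S : qcar -> Prop) x, S x -> qle x (qsup S);
  qsup_least : forall (S : qcar -> Prop) u, (forall x, S x -> qle x u) -> qle (qsup S) u;
  qten : qcar -> qcar -> qcar;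
  qk : qcar;
  qten_comm : forall x y, qten x y = qten y x;
  qten_assoc : forall x y z, qten x (qten y z) = qten (qten x y) z;
  qten_unit : forall x, qten qk x = x;
  qten_supr : forall x (S : qcar -> Prop),
      qten x (qsup S) = qsup (fun z => exists s, S s /\ z = qten x s);
  qten_supl : forall x (S : qcar -> Prop),
      qten (qsup S) x = qsup (fun z => exists s, S s /\ z = qten s x)
}.

Arguments qle {q}.
Arguments qsup {q}.
Arguments qten {q}.
Arguments qk {q}.

Definition qtop (V : Quantale) : V := qsup (fun _ => True).

Definition qmeet (V : Quantale) (x y : V) : V :=
  qsup (fun z => qle z x /\ qle z y).

Definition is_frame (V : Quantale) : Prop :=
  forall (x : V) (S : V -> Prop),
    qmeet x (qsup S) = qsup (fun z => exists s, S s /\ z = qmeet x s).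

Definition is_group (T : Type) (add : T -> T -> T) (zero : T) (opp : T -> T) : Prop :=
  (forall x y z, add x (add y z) = add (add x y) z) /\
  (forall x, add zero x = x) /\ (forall x, add x zero = x) /\
  (forall x, add (opp x) x = zero) /\ (forall x, add x (opp x) = zero).

Definition is_vcat (V : Quantale) (X : Type) (a : X -> X -> V) : Prop :=
  (forall x, qle qk (a x x)) /\
  (forall x x' x'', qle (qten (a x x') (a x' x'')) (a x x'')).

Definition is_vfunctor (V : Quantale) (X Y : Type) (a : X -> X -> V) (b : Y -> Y -> V)
  (f : X -> Y) : Prop :=
  forall x x', qle (a x x') (b (f x) (f x')).

Definition vtensor (V : Quantale) (X Y : Type) (a : X -> X -> V) (b : Y -> Y -> V)
  : X * Y -> X * Y -> V :=
  fun p q => qten (a (fst p) (fst q)) (b (snd p) (snd q)).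

Record RawVG (V : Quantale) := {
  r_car :> Type;
  r_add : r_car -> r_car -> r_car;
  r_zero : r_car;
  r_opp : r_car -> r_car;
  r_dist : r_car -> r_car -> V
}.

Arguments r_add {V r}.
Arguments r_zero {V}.
Arguments r_opp {V r}.
Arguments r_dist {V r}.

Definition is_vgroup (V : Quantale) (G : RawVG V) : Prop :=
  is_group (@r_add V G) (r_zero G) (@r_opp V G) /\
  is_vcat (@r_dist V G) /\
  (forall x1 x2 x1' x2' : G,
      qle (qten (r_dist x1 x2) (r_dist x1' x2')) (r_dist (r_add x1 x1') (r_add x2 x2'))).

Record VGroup (V : Quantale) := {
  vg_raw :> RawVG V;
  vg_ax : is_vgroup vg_raw
}.

Definition is_vhom (V : Quantale) (A B : RawVG V) (f : A -> B) : Prop :=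
  (forall x y : A, f (r_add x y) = r_add (f x) (f y)) /\
  is_vfunctor (@r_dist V A) (@r_dist V B) f.

(** [k : K -> A] is a kernel of [p : A -> B] in VGrp (a pointed category whose
    zero morphisms are the constant-zero maps). *)
Definition is_kernel_VGrp (V : Quantale) (K A B : RawVG V) (k : K -> A) (p : A -> B)
  : Prop :=
  is_vhom k /\ (forall x : K, p (k x) = r_zero B) /\
  forall (Z : VGroup V) (f : Z -> A),
    is_vhom (A := Z) f -> (forall z, p (f z) = r_zero B) ->
    exists g : Z -> K,
      is_vhom (A := Z) g /\ (forall z, k (g z) = f z) /\
      (forall g' : Z -> K, is_vhom (A := Z) g' -> (forall z, k (g' z) = f z) ->
         forall z, g' z = g z).

Definition is_bijective (X : Type) (f : X -> X) : Prop :=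
  exists g : X -> X, (forall x, g (f x) = x) /\ (forall x, f (g x) = x).

Definition is_group_action (V : Quantale) (X Y : VGroup V) (phi : Y -> X -> X) : Prop :=
  (forall (y : Y) (x x' : X), phi y (r_add x x') = r_add (phi y x) (phi y x')) /\
  (forall y : Y, is_bijective (phi y)) /\
  (forall x : X, phi (r_zero Y) x = x) /\
  (forall (y y' : Y) (x : X), phi (r_add y y') x = phi y (phi y' x)).

Definition sd_add (V : Quantale) (X Y : VGroup V) (phi : Y -> X -> X)
  (p q : X * Y) : X * Y :=
  (r_add (fst p) (phi (snd p) (fst q)), r_add (snd p) (snd q)).

Definition sd_opp (V : Quantale) (X Y : VGroup V) (phi : Y -> X -> X)
  (p : X * Y) : X * Y :=
  (phi (r_opp (snd p)) (r_opp (fst p)), r_opp (snd p)).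

Definition semidirect (V : Quantale) (X Y : VGroup V) (phi : Y -> X -> X) : RawVG V :=
  {| r_car := (X * Y)%type;
     r_add := sd_add phi;
     r_zero := (r_zero X, r_zero Y);
     r_opp := sd_opp phi;
     r_dist := vtensor (@r_dist V X) (@r_dist V Y) |}.

Definition incl1 (V : Quantale) (X Y : VGroup V) (x : X) : X * Y := (x, r_zero Y).
Definition incl2 (V : Quantale) (X Y : VGroup V) (y : Y) : X * Y := (r_zero X, y).
Definition proj2 (V : Quantale) (X Y : VGroup V) (p : X * Y) : (Y : Type) := snd p.

Definition split_extension_sd (V : Quantale) (X Y : VGroup V) (phi : Y -> X -> X)
  : Prop :=
  is_vgroup (semidirect phi) /\
  is_vhom (A := X) (B := semidirect phi) (@incl1 V X Y) /\
  is_vhom (A := semidirect phi) (B := Y) (@proj2 V X Y) /\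
  is_vhom (A := Y) (B := semidirect phi) (@incl2 V X Y) /\
  (forall y : Y, proj2 (incl2 X y) = y) /\
  is_kernel_VGrp (K := X) (A := semidirect phi) (B := Y) (@incl1 V X Y) (@proj2 V X Y).

Definition phibar (V : Quantale) (X Y : VGroup V) (phi : Y -> X -> X)
  (p : X * Y) : X * Y := (phi (snd p) (fst p), snd p).


Set Implicit Arguments.
Unset Strict Implicit.

(* Since [k = ⊤], every tensor [u ⊗ v] lies below [u] and below [v], and every
   diagonal distance [a(x, x)] equals [k].  Hence [(0, y) + (x, 0) = (φ_y x, y)]
   turns the compatibility of [a ⊗ b] with the semidirect addition, applied to
   these four points, into exactly the V-functoriality of [φ̄]; conversely,
   writing [(x1, y1) + (x1', y1') = (x1 + φ_{y1} x1', y1 + y1')], functoriality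
   of [φ̄] bounds the middle terms and the compatibility of [a] and [b] does the
   rest.  Integrality also makes [π2], [⟨1,0⟩] and [⟨0,1⟩] V-functors and the
   corestriction [f ↦ fst ∘ f] a V-homomorphism, which gives the kernel
   property. *)

Section QuantaleTensor.

Variable V : Quantale.

Lemma qten_monor (z x y : V) : qle x y -> qle (qten z x) (qten z y).
Proof.
  intro Hxy.
  assert (Hsup : qsup (fun w => w = x \/ w = y) = y).
  { apply qle_antisym.
    - apply qsup_least. intros w [-> | ->]; [exact Hxy | apply qle_refl].
    - apply qsup_ub. right; reflexivity. }
  rewrite <- Hsup, qten_supr.
  apply qsup_ub. exists x. split; [left |]; reflexivity.
Qed.

Lemma qten_mono (x x' y y' : V) :
  qle x x' -> qle y y' -> qle (qten x y) (qten x' y').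
Proof.
  intros Hx Hy. apply qle_trans with (qten x y').
  - apply qten_monor; exact Hy.
  - rewrite (qten_comm x), (qten_comm x'). apply qten_monor; exact Hx.
Qed.

Lemma qten_unitr (x : V) : qten x qk = x.
Proof. rewrite qten_comm; apply qten_unit. Qed.

Lemma qle_qtop (x : V) : qle x (qtop V).
Proof. apply qsup_ub. exact I. Qed.

Lemma qten_ACA (u v w z : V) :
  qten (qten u v) (qten w z) = qten (qten u w) (qten v z).
Proof.
  rewrite <- !qten_assoc. f_equal. rewrite !qten_assoc. f_equal. apply qten_comm.
Qed.

Lemma vtensor_is_vcat (X Y : Type) (a : X -> X -> V) (b : Y -> Y -> V) :
  is_vcat a -> is_vcat b -> is_vcat (vtensor a b).
Proof.
  intros [Ha_refl Ha_trans] [Hb_refl Hb_trans]. split.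
  - intros [x y]. unfold vtensor; simpl.
    rewrite <- (qten_unit qk). apply qten_mono; auto.
  - intros [x y] [x' y'] [x'' y'']. unfold vtensor; simpl.
    rewrite qten_ACA. apply qten_mono; auto.
Qed.

Hypothesis Hk : qk = qtop V.

Lemma qten_lel (x y : V) : qle (qten x y) x.
Proof.
  apply qle_trans with (qten x qk); [| rewrite qten_unitr; apply qle_refl].
  apply qten_monor. rewrite Hk. apply qle_qtop.
Qed.

Lemma qten_ler (x y : V) : qle (qten x y) y.
Proof. rewrite qten_comm. apply qten_lel. Qed.

Lemma vcat_diag (X : Type) (a : X -> X -> V) (x : X) : is_vcat a -> a x x = qk.
Proof.
  intros [Hrefl _]. apply qle_antisym; [rewrite Hk; apply qle_qtop | apply Hrefl].
Qed.

End QuantaleTensor.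

Lemma additive_fixes_zero (T : Type) (add : T -> T -> T) (zero : T) (opp : T -> T)
  (f : T -> T) :
  is_group add zero opp -> (forall x x', f (add x x') = add (f x) (f x')) ->
  f zero = zero.
Proof.
  intros [Hassoc [Hzerol [_ [Hoppl _]]]] Hadd.
  assert (Hidem : f zero = add (f zero) (f zero)) by (rewrite <- Hadd, Hzerol; reflexivity).
  transitivity (add (add (opp (f zero)) (f zero)) (f zero)).
  - rewrite Hoppl, Hzerol. reflexivity.
  - rewrite <- Hassoc, <- Hidem. apply Hoppl.
Qed.

Definition dist_add_compatible (V : Quantale) (G : RawVG V) : Prop :=
  forall x1 x2 x1' x2' : G,
    qle (qten (r_dist x1 x2) (r_dist x1' x2')) (r_dist (r_add x1 x1') (r_add x2 x2')).

Lemma vgroup_is_group (V : Quantale) (G : VGroup V) :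
  is_group (@r_add V G) (r_zero G) (@r_opp V G).
Proof. destruct (vg_ax G) as [Hgroup _]; exact Hgroup. Qed.

Lemma vgroup_is_vcat (V : Quantale) (G : VGroup V) : is_vcat (@r_dist V G).
Proof. destruct (vg_ax G) as [_ [Hcat _]]; exact Hcat. Qed.

Lemma vgroup_add_compatible (V : Quantale) (G : VGroup V) : dist_add_compatible G.
Proof. destruct (vg_ax G) as [_ [_ Hcompat]]; exact Hcompat. Qed.

Section Semidirect.

Variables (V : Quantale) (X Y : VGroup V) (phi : Y -> X -> X).
Hypothesis Hphi : is_group_action phi.

Let GX := vgroup_is_group X.
Let GY := vgroup_is_group Y.
Let cat_X := vgroup_is_vcat X.
Let cat_Y := vgroup_is_vcat Y.

Lemma action_fixes_zero (y : Y) : phi y (r_zero X) = r_zero X.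
Proof. apply (additive_fixes_zero GX). apply Hphi. Qed.

Lemma semidirect_is_group :
  is_group (@r_add V (semidirect phi)) (r_zero (semidirect phi)) (@r_opp V (semidirect phi)).
Proof.
  destruct GX as [XA [X0l [X0r [XNl XNr]]]], GY as [YA [Y0l [Y0r [YNl YNr]]]].
  destruct Hphi as [Hadd [_ [Hzero Hcomp]]].
  pose proof action_fixes_zero as Hfix.
  simpl; unfold sd_add, sd_opp; simpl.
  split; [| split; [| split; [| split]]].
  - intros [x1 y1] [x2 y2] [x3 y3]; simpl. rewrite Hadd, Hcomp, XA, YA. reflexivity.
  - intros [x y]; simpl. rewrite Hzero, X0l, Y0l. reflexivity.
  - intros [x y]; simpl. rewrite Hfix, X0r, Y0r. reflexivity.
  - intros [x y]; simpl. rewrite <- Hadd, XNl, Hfix, YNl. reflexivity.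
  - intros [x y]; simpl. rewrite <- Hcomp, YNr, Hzero, XNr. reflexivity.
Qed.

Lemma phibar_as_sd_add (x : X) (y : Y) :
  phibar phi (x, y) = sd_add phi (r_zero X, y) (x, r_zero Y).
Proof.
  destruct GX as [_ [X0l _]], GY as [_ [_ [Y0r _]]].
  unfold sd_add, phibar; simpl. rewrite X0l, Y0r. reflexivity.
Qed.

Let dXY := vtensor (@r_dist V X) (@r_dist V Y).

Lemma compatible_of_phibar_vfunctor :
  is_vfunctor dXY dXY (phibar phi) -> dist_add_compatible (semidirect phi).
Proof.
  pose proof (vgroup_add_compatible (G := X)) as Xcompat.
  pose proof (vgroup_add_compatible (G := Y)) as Ycompat.
  intros Hf [x1 y1] [x2 y2] [x1' y1'] [x2' y2'].
  specialize (Hf (x1', y1) (x2', y2)).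
  simpl; unfold dXY, vtensor, phibar, sd_add in *; simpl in *.
  assert (Hregroup : forall u v w z : V,
             qten (qten u v) (qten w z) = qten u (qten (qten w v) z)).
  { intros u v w z. rewrite (qten_comm w v), <- !qten_assoc. reflexivity. }
  rewrite Hregroup.
  eapply qle_trans.
  { apply qten_monor, qten_mono; [exact Hf | apply qle_refl]. }
  rewrite <- Hregroup, qten_ACA.
  apply qten_mono; auto.
Qed.

Section Integral.

Hypothesis Hk : qk = qtop V.

Lemma phibar_vfunctor_of_compatible :
  dist_add_compatible (semidirect phi) -> is_vfunctor dXY dXY (phibar phi).
Proof.
  intros Hcompat [x y] [x' y'].
  specialize (Hcompat (r_zero X, y) (r_zero X, y') (x, r_zero Y) (x', r_zero Y)).
  cbn [semidirect r_add r_dist] in Hcompat. rewrite <- !phibar_as_sd_add in Hcompat.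
  unfold dXY, vtensor in *; simpl in *.
  rewrite !(vcat_diag Hk _ cat_X), !(vcat_diag Hk _ cat_Y), qten_unit, qten_unitr,
    qten_comm in Hcompat.
  exact Hcompat.
Qed.

Lemma incl1_vhom : is_vhom (A := X) (B := semidirect phi) (@incl1 V X Y).
Proof.
  destruct GY as [_ [Y0l _]], Hphi as [_ [_ [Hzero _]]]. split.
  - intros x x'. unfold incl1; simpl; unfold sd_add; simpl.
    rewrite Hzero, Y0l. reflexivity.
  - intros x x'. unfold incl1; simpl; unfold vtensor; simpl.
    rewrite (vcat_diag Hk _ cat_Y), qten_unitr. apply qle_refl.
Qed.

Lemma incl2_vhom : is_vhom (A := Y) (B := semidirect phi) (@incl2 V X Y).
Proof.
  destruct GX as [_ [X0l _]]. split.
  - intros y y'. unfold incl2; simpl; unfold sd_add; simpl.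
    rewrite action_fixes_zero, X0l. reflexivity.
  - intros y y'. unfold incl2; simpl; unfold vtensor; simpl.
    rewrite (vcat_diag Hk _ cat_X), qten_unit. apply qle_refl.
Qed.

Lemma proj2_vhom : is_vhom (A := semidirect phi) (B := Y) (@proj2 V X Y).
Proof.
  split.
  - intros p q. reflexivity.
  - intros p q. apply qten_ler; exact Hk.
Qed.

Lemma incl1_kernel_proj2 :
  is_kernel_VGrp (K := X) (A := semidirect phi) (B := Y) (@incl1 V X Y) (@proj2 V X Y).
Proof.
  destruct Hphi as [_ [_ [Hzero _]]].
  split; [exact incl1_vhom | split; [reflexivity |]].
  intros Z f [f_add f_vfun] f_ker.
  exists (fun z => fst (f z)). split; [split | split].
  - intros z z'. rewrite f_add. simpl; unfold sd_add; simpl.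
    pose proof (f_ker z) as Hz. unfold proj2 in Hz. rewrite Hz, Hzero. reflexivity.
  - intros z z'. eapply qle_trans; [apply f_vfun | apply qten_lel; exact Hk].
  - intros z. pose proof (f_ker z) as Hz. unfold proj2 in Hz. unfold incl1.
    rewrite <- Hz. destruct (f z); reflexivity.
  - intros g' _ Hg' z. rewrite <- (Hg' z). reflexivity.
Qed.

End Integral.

End Semidirect.

Theorem theorem7p2 (V : Quantale) (Hframe : is_frame V) (Hk : qk = qtop V)
  (X Y : VGroup V) (phi : Y -> X -> X) (Hphi : is_group_action phi) :
  split_extension_sd phi <->
  is_vfunctor (vtensor (@r_dist V X) (@r_dist V Y)) (vtensor (@r_dist V X) (@r_dist V Y))
    (phibar phi).
Proof.
  split.
  - intros [[_ [_ Hcompat]] _].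
    exact (phibar_vfunctor_of_compatible Hk Hcompat).
  - intros Hf.
    split; [| split; [| split; [| split; [| split]]]].
    + split; [exact (semidirect_is_group Hphi) |].
      split; [apply vtensor_is_vcat; apply vgroup_is_vcat |].
      exact (compatible_of_phibar_vfunctor Hf).
    + exact (incl1_vhom Hphi Hk).
    + exact (proj2_vhom phi Hk).
    + exact (incl2_vhom Hphi Hk).
    + intros y; reflexivity.
    + exact (incl1_kernel_proj2 Hphi Hk).
Qed.
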